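(* Let $n,k$ be integers with $2\le k\le n/2$. If $n$ and $k-1$ are coprime, then every Gutkin $(n,k)$-gon is equiangular.
   Context: Let $P$ be a convex $n$-gon in the Euclidean plane with vertices $v_0,\dots,v_{n-1}$ in their cyclic (counterclockwise) order, indices taken modulo $n$. $P$ is a Gutkin $(n,k)$-gon if there exists an angle $\alpha$ such that for every $i$, $\angle v_{i+1}v_iv_{i+k}=\angle v_{i+k-1}v_{i+k}v_i=\alpha$, where $\angle abc$ denotes the angle at $b$ between the segments $ba$ and $bc$. Equiangular means all interior angles are equal. *)

From Stdlib Require Import Reals Lra Lia Arith.
Open Scope R_scope.

Definition pt : Type := (R * R)%type.

Definition vsub (a b : pt) : pt := (fst a - fst b, snd a - snd b).
Definition dot (a b : pt) : R := fst a * fst b + snd a * snd b.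
Definition cross (a b : pt) : R := fst a * snd b - snd a * fst b.
Definition norm (a : pt) : R := sqrt (dot a a).

Definition angle (a b c : pt) : R :=
  acos (dot (vsub a b) (vsub c b) / (norm (vsub a b) * norm (vsub c b))).

Definition vtx (n : nat) (v : nat -> pt) (i : nat) : pt := v (i mod n).

(* P = v_0 ... v_{n-1} is a convex n-gon with vertices in counterclockwise order:
   every other vertex lies strictly to the left of each directed edge v_i v_{i+1}. *)
Definition convex_ccw_polygon (n : nat) (v : nat -> pt) : Prop :=
  (3 <= n)%nat /\
  forall i j : nat, (i < n)%nat -> (j < n)%nat -> j <> i -> j <> ((i + 1) mod n)%nat ->
    0 < cross (vsub (vtx n v (i + 1)) (vtx n v i)) (vsub (vtx n v j) (vtx n v i)).

(* Gutkin (n,k)-gon condition (k >= 1 so that i + k - 1 is the intended index). *)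
Definition gutkin (n k : nat) (v : nat -> pt) : Prop :=
  exists alpha : R, forall i : nat,
    angle (vtx n v (i + 1)) (vtx n v i) (vtx n v (i + k)) = alpha /\
    angle (vtx n v (i + k - 1)) (vtx n v (i + k)) (vtx n v i) = alpha.

Definition interior_angle (n : nat) (v : nat -> pt) (i : nat) : R :=
  angle (vtx n v (i + n - 1)) (vtx n v i) (vtx n v (i + 1)).

Definition equiangular (n : nat) (v : nat -> pt) : Prop :=
  forall i j : nat, interior_angle n v i = interior_angle n v j.

(* Let e_j be the unit direction of the edge v_j v_(j+1). By convexity the chord
   v_i v_(i+k) is obtained from e_i by a counterclockwise turn through alpha, and
   e_(i+k-1) from the chord by another turn through alpha; hence e_(i+k-1) is e_i
   rotated by 2 alpha. Rotations preserve inner products, so the turning angle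
   between consecutive edges, which determines the interior angle, is
   (k-1)-periodic in the vertex index. It is also n-periodic, and gcd(n, k-1) = 1
   makes it constant. *)

From Stdlib Require Import Reals Arith Lra Lia Psatz.
Open Scope R_scope.

Definition opp (a : pt) : pt := (- fst a, - snd a).
Definition unitv (a : pt) : pt := (fst a / norm a, snd a / norm a).
Definition rot (t : R) (a : pt) : pt :=
  (cos t * fst a - sin t * snd a, sin t * fst a + cos t * snd a).

Lemma lagrange_identity a b : dot a b ^ 2 + cross a b ^ 2 = dot a a * dot b b.
Proof. unfold dot, cross; ring. Qed.

Lemma dot_self_ge0 a : 0 <= dot a a.
Proof. unfold dot; nra. Qed.

Lemma norm_sqr a : norm a * norm a = dot a a.
Proof. unfold norm; apply sqrt_sqrt, dot_self_ge0. Qed.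

Lemma cross_neq0_norm_gt0 a b : cross a b <> 0 -> 0 < norm a /\ 0 < norm b.
Proof.
  intros Hc.
  assert (Hpos : 0 < dot a a * dot b b).
  { rewrite <- lagrange_identity.
    pose proof (Rsqr_pos_lt _ Hc); rewrite Rsqr_pow2 in *.
    pose proof (pow2_ge_0 (dot a b)); lra. }
  pose proof (dot_self_ge0 a); pose proof (dot_self_ge0 b).
  unfold norm; split; apply sqrt_lt_R0; nra.
Qed.

Lemma dot_unitv a b : norm a <> 0 -> norm b <> 0 ->
  dot (unitv a) (unitv b) = dot a b / (norm a * norm b).
Proof. intros; unfold unitv, dot; simpl; field; auto. Qed.

Lemma cross_unitv a b : norm a <> 0 -> norm b <> 0 ->
  cross (unitv a) (unitv b) = cross a b / (norm a * norm b).
Proof. intros; unfold unitv, cross; simpl; field; auto. Qed.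

Lemma dot_unitv_self a : norm a <> 0 -> dot (unitv a) (unitv a) = 1.
Proof. intros; rewrite dot_unitv, <- norm_sqr by auto; field; auto. Qed.

Lemma norm_opp a : norm (opp a) = norm a.
Proof. unfold norm, dot, opp; simpl; f_equal; ring. Qed.

Lemma unitv_opp a : unitv (opp a) = opp (unitv a).
Proof. unfold unitv; rewrite norm_opp; unfold opp; simpl; f_equal; unfold Rdiv; ring. Qed.

Lemma opp_vsub p q : opp (vsub p q) = vsub q p.
Proof. unfold opp, vsub; simpl; f_equal; ring. Qed.

Lemma opp_inj a b : opp a = opp b -> a = b.
Proof. destruct a, b; unfold opp; simpl; intros [= H1 H2]; f_equal; lra. Qed.

Lemma rot_opp t a : rot t (opp a) = opp (rot t a).
Proof. unfold rot, opp; simpl; f_equal; ring. Qed.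

Lemma rot_dot t a b : dot (rot t a) (rot t b) = dot a b.
Proof.
  pose proof (sin2_cos2 t) as H; unfold Rsqr in H.
  unfold rot, dot; simpl.
  transitivity ((sin t * sin t + cos t * cos t) * (fst a * fst b + snd a * snd b));
    [ring | rewrite H; ring].
Qed.

(* Coordinates of [y] in the orthonormal frame [x], [x] turned by a right angle. *)
Lemma rot_of_coords x y t : dot x x = 1 ->
  cos t = dot x y -> sin t = cross x y -> y = rot t x.
Proof.
  destruct x as [x1 x2], y as [y1 y2]; unfold dot, cross, rot; simpl.
  intros Hx -> ->; f_equal.
  - replace y1 with (y1 * (x1 * x1 + x2 * x2)) at 1 by (rewrite Hx; ring); ring.
  - replace y2 with (y2 * (x1 * x1 + x2 * x2)) at 1 by (rewrite Hx; ring); ring.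
Qed.

Lemma cross_vsub_cycle p q r : cross (vsub r q) (vsub p q) = cross (vsub q p) (vsub r p).
Proof. unfold cross, vsub; simpl; ring. Qed.

Lemma angle_sym a b c : angle a b c = angle c b a.
Proof. unfold angle; f_equal; unfold dot; rewrite Rmult_comm; f_equal; ring. Qed.

Lemma angle_rot_ccw a b c : 0 < cross (vsub a b) (vsub c b) ->
  unitv (vsub c b) = rot (angle a b c) (unitv (vsub a b)).
Proof.
  set (p := vsub a b); set (q := vsub c b); intros Hc.
  destruct (cross_neq0_norm_gt0 p q) as [Hp Hq]; [lra|].
  assert (Hp0 : norm p <> 0) by lra; assert (Hq0 : norm q <> 0) by lra.
  set (x := unitv p); set (y := unitv q).
  assert (Hcross : 0 < cross x y).
  { unfold x, y; rewrite cross_unitv by auto.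
    apply Rdiv_lt_0_compat; [lra | nra]. }
  assert (Hlag : dot x y ^ 2 + cross x y ^ 2 = 1).
  { rewrite lagrange_identity; unfold x, y; rewrite !dot_unitv_self by auto; ring. }
  assert (Hdot : -1 <= dot x y <= 1) by nra.
  assert (Hang : angle a b c = acos (dot x y)).
  { unfold x, y; rewrite dot_unitv by auto; reflexivity. }
  apply rot_of_coords; [unfold x; apply dot_unitv_self; auto | |].
  - rewrite Hang, cos_acos by auto; reflexivity.
  - rewrite Hang, sin_acos, Rsqr_pow2 by auto.
    replace (1 - dot x y ^ 2) with (cross x y ^ 2) by lra.
    apply sqrt_pow2; lra.
Qed.

Lemma add_mod_neq n i d : (0 < d < n)%nat -> ((i + d) mod n <> i mod n)%nat.
Proof.
  intros Hd; assert (Hn : n <> 0%nat) by lia.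
  rewrite <- Nat.Div0.add_mod_idemp_l.
  pose proof (Nat.mod_upper_bound i n Hn).
  destruct (Nat.lt_ge_cases (i mod n + d) n).
  - rewrite Nat.mod_small; lia.
  - replace (i mod n + d)%nat with ((i mod n + d - n) + 1 * n)%nat by lia.
    rewrite Nat.Div0.mod_add, Nat.mod_small; lia.
Qed.

Lemma coprime_periods_const {A : Type} (f : nat -> A) p q :
  (0 < p)%nat -> Nat.gcd p q = 1%nat ->
  (forall m, f (m + p)%nat = f m) -> (forall m, f (m + q)%nat = f m) ->
  forall m, f m = f 0%nat.
Proof.
  intros Hp Hpq Hfp Hfq.
  assert (Hmul : forall r (Hr : forall m, f (m + r)%nat = f m) c m, f (m + c * r)%nat = f m).
  { intros r Hr c; induction c as [|c IH]; intros m.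
    - now rewrite Nat.add_0_r.
    - replace (m + S c * r)%nat with (m + c * r + r)%nat by lia; rewrite Hr; apply IH. }
  destruct (Nat.gcd_bezout_pos p q Hp) as [u [w Huw]]; rewrite Hpq in Huw.
  assert (Hstep : forall m, f (S m) = f m).
  { intros m; rewrite <- (Hmul q Hfq w (S m)), <- (Hmul p Hfp u m); f_equal; lia. }
  intros m; induction m as [|m IH]; [reflexivity | now rewrite Hstep].
Qed.

Section ConvexPolygon.

Variables (n : nat) (v : nat -> pt).
Hypothesis convex : convex_ccw_polygon n v.

Lemma vtx_mod m : vtx n v (m mod n) = vtx n v m.
Proof. unfold vtx; now rewrite Nat.Div0.mod_mod. Qed.

Lemma vtx_add_period m : vtx n v (m + n) = vtx n v m.
Proof.
  unfold vtx; replace (m + n)%nat with (m + 1 * n)%nat by lia.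
  now rewrite Nat.Div0.mod_add.
Qed.

Lemma convex_left_of_edge i d : (1 < d < n)%nat ->
  0 < cross (vsub (vtx n v (i + 1)) (vtx n v i)) (vsub (vtx n v (i + d)) (vtx n v i)).
Proof.
  intros Hd; destruct convex as [_ Hleft].
  assert (Hn : n <> 0%nat) by lia.
  specialize (Hleft (i mod n)%nat ((i + d) mod n)%nat
               (Nat.mod_upper_bound _ _ Hn) (Nat.mod_upper_bound _ _ Hn)).
  rewrite Nat.Div0.add_mod_idemp_l, !vtx_mod in Hleft.
  rewrite <- (vtx_mod (i mod n + 1)), Nat.Div0.add_mod_idemp_l, vtx_mod in Hleft.
  apply Hleft; [apply add_mod_neq; lia |].
  replace (i + d)%nat with (i + 1 + (d - 1))%nat by lia; apply add_mod_neq; lia.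
Qed.

Definition edge_dir j := unitv (vsub (vtx n v (j + 1)) (vtx n v j)).
Definition turn j := dot (edge_dir j) (edge_dir (j + 1)).

Lemma edge_norm_neq0 j : norm (vsub (vtx n v (j + 1)) (vtx n v j)) <> 0.
Proof.
  assert (H3 : (1 < 2 < n)%nat) by (destruct convex; lia).
  pose proof (convex_left_of_edge j 2 H3) as Hc.
  destruct (cross_neq0_norm_gt0 _ _ (Rgt_not_eq _ _ Hc)); lra.
Qed.

Lemma turn_add_period j : turn (j + n) = turn j.
Proof.
  unfold turn, edge_dir.
  replace (j + n + 1)%nat with (j + 1 + n)%nat by lia.
  replace (j + 1 + n + 1)%nat with (j + 1 + 1 + n)%nat by lia.
  now rewrite !vtx_add_period.
Qed.

(* Edge i + n - 1 is edge i - 1, written so as to avoid truncated subtraction at i = 0. *)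
Lemma interior_angle_turn i : interior_angle n v i = acos (- turn (i + n - 1)).
Proof.
  assert (Hn : (0 < n)%nat) by (destruct convex; lia).
  set (j := (i + n - 1)%nat).
  assert (Hj1 : vtx n v (j + 1) = vtx n v i).
  { replace (j + 1)%nat with (i + n)%nat by (unfold j; lia); apply vtx_add_period. }
  assert (Hj2 : vtx n v (j + 1 + 1) = vtx n v (i + 1)).
  { replace (j + 1 + 1)%nat with (i + 1 + n)%nat by (unfold j; lia); apply vtx_add_period. }
  pose proof (edge_norm_neq0 j) as Hj; pose proof (edge_norm_neq0 (j + 1)) as Hj'.
  rewrite Hj1 in Hj; rewrite Hj1, Hj2 in Hj'.
  unfold interior_angle, angle, turn, edge_dir; fold j.
  rewrite Hj1, Hj2, dot_unitv by auto; f_equal.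
  rewrite <- (opp_vsub (vtx n v i)), norm_opp.
  unfold dot, opp; simpl; unfold Rdiv; ring.
Qed.

Section Gutkin.

Variables (k : nat) (alpha : R).
Hypotheses (k_ge2 : (2 <= k)%nat) (k_lt_n : (k < n)%nat).
Hypothesis gutkin_angles : forall i : nat,
  angle (vtx n v (i + 1)) (vtx n v i) (vtx n v (i + k)) = alpha /\
  angle (vtx n v (i + k - 1)) (vtx n v (i + k)) (vtx n v i) = alpha.

Lemma gutkin_chord_dir i :
  unitv (vsub (vtx n v (i + k)) (vtx n v i)) = rot alpha (edge_dir i).
Proof.
  destruct (gutkin_angles i) as [<- _].
  apply angle_rot_ccw, convex_left_of_edge; lia.
Qed.

(* At v_(i+k) the chord to v_i lies clockwise from the edge back to v_(i+k-1). *)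
Lemma gutkin_edge_from_chord i :
  edge_dir (i + (k - 1)) = rot alpha (unitv (vsub (vtx n v (i + k)) (vtx n v i))).
Proof.
  set (j := (i + (k - 1))%nat).
  assert (Hj1 : (j + 1 = i + k)%nat) by (unfold j; lia).
  assert (Hleft : 0 < cross (vsub (vtx n v i) (vtx n v (i + k)))
                            (vsub (vtx n v j) (vtx n v (i + k)))).
  { replace (vtx n v i) with (vtx n v (j + (n - k + 1)))
      by (replace (j + (n - k + 1))%nat with (i + n)%nat by (unfold j; lia);
          apply vtx_add_period).
    pose proof (convex_left_of_edge j (n - k + 1)) as H; rewrite Hj1 in H.
    rewrite cross_vsub_cycle; apply H; lia. }
  destruct (gutkin_angles i) as [_ Halpha].
  replace (i + k - 1)%nat with j in Halpha by (unfold j; lia).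
  pose proof (angle_rot_ccw _ _ _ Hleft) as Hrot.
  rewrite angle_sym, Halpha, <- (opp_vsub (vtx n v (i + k)) (vtx n v j)),
    <- (opp_vsub (vtx n v (i + k)) (vtx n v i)), !unitv_opp, rot_opp in Hrot.
  unfold edge_dir; rewrite Hj1; now apply opp_inj.
Qed.

Lemma gutkin_turn_period j : turn (j + (k - 1)) = turn j.
Proof.
  unfold turn.
  replace (j + (k - 1) + 1)%nat with (j + 1 + (k - 1))%nat by lia.
  now rewrite !gutkin_edge_from_chord, !gutkin_chord_dir, !rot_dot.
Qed.

End Gutkin.

End ConvexPolygon.

Theorem mainTheorem10 (n k : nat) :
  (2 <= k)%nat -> (2 * k <= n)%nat -> Nat.gcd n (k - 1) = 1%nat ->
  forall v : nat -> pt,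
    convex_ccw_polygon n v -> gutkin n k v -> equiangular n v.
Proof.
  intros Hk Hkn Hgcd v Hconv [alpha Hgut] i j.
  assert (Hconst : forall m, turn n v m = turn n v 0).
  { apply (coprime_periods_const _ (k - 1) n).
    - lia.
    - now rewrite Nat.gcd_comm.
    - intros m; apply (gutkin_turn_period n v Hconv k alpha); [lia | lia | exact Hgut].
    - apply turn_add_period. }
  rewrite !(interior_angle_turn n v Hconv).
  now rewrite (Hconst (i + n - 1)%nat), (Hconst (j + n - 1)%nat).
Qed.
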